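(* Let $K$ be a number field and let $\alpha>0$ and $\beta>0$ be two algebraically independent real numbers. Suppose $F(x)\in K[[x^{\mathbb{R}}]]$ is a Hahn series that is both $\alpha$-Mahler and $\beta$-Mahler. Then $F(x)$ is rational, i.e. $F(x)\in K(x)$.
   Context: A Hahn series over $K$ with exponent group $\mathbb{R}$ is a formal expression $F(x)=\sum_{i\in\mathbb{R}} f_i x^i$ with $f_i\in K$ whose support $P(F)=\{i: f_i\neq 0\}$ is well-ordered; these form a field $K[[x^{\mathbb{R}}]]$ containing $K(x)$. For $\gamma>0$, $F(x^\gamma)=\sum_i f_i x^{\gamma i}$. For real $\gamma>0$, $F$ is $\gamma$-Mahler if there exist $d\ge0$ and polynomials $P_0,\dots,P_d,A\in K[x]$, not all $P_i$ zero, with $\sum_{i=0}^d P_i(x)F(x^{\gamma^i})=A(x)$. *)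

From HB Require Import structures.
From mathcomp Require Import all_boot all_order all_algebra all_field.
From mathcomp Require Import reals.
Set Implicit Arguments. Unset Strict Implicit. Unset Printing Implicit Defensive.
Import Order.TTheory GRing.Theory Num.Theory.
Local Open Scope ring_scope.

(* A number field is represented as a finite-dimensional field extension of Q. *)
(* Hahn series over K with exponent group R (R : realType, i.e. the reals)   *)
(* are represented by their coefficient function R -> K, subject to          *)
(* [is_hahn] (well-ordered support).                                         *)

Definition well_ordered_set (R : realType) (S : R -> Prop) : Prop :=
  forall A : R -> Prop, (forall e, A e -> S e) -> (exists e, A e) ->
    exists m, A m /\ forall e, A e -> m <= e.

Definition hahn_support (R : realType) (K : fieldType) (F : R -> K) : R -> Prop :=
  fun e => F e != 0.

Definition is_hahn (R : realType) (K : fieldType) (F : R -> K) : Prop :=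
  well_ordered_set (hahn_support F).

(* F(x^gamma) : coefficient of x^e is the coefficient of x^(e/gamma) in F *)
Definition hahn_subst (R : realType) (K : fieldType) (gamma : R) (F : R -> K)
  : R -> K := fun e => F (e / gamma).

Definition hahn_pmul (R : realType) (K : fieldType) (P : {poly K}) (G : R -> K)
  : R -> K := fun e => \sum_(k < size P) P`_k * G (e - k%:R).

Definition hahn_of_poly (R : realType) (K : fieldType) (A : {poly K}) : R -> K :=
  fun e => \sum_(k < size A) (if e == k%:R then A`_k else 0).

(* F is gamma-Mahler: sum_{i=0}^d P_i(x) F(x^{gamma^i}) = A(x), not all P_i zero *)
Definition is_mahler (R : realType) (K : fieldType) (gamma : R) (F : R -> K) : Prop :=
  exists (d : nat) (P : nat -> {poly K}) (A : {poly K}),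
    (exists i, (i <= d)%N /\ P i != 0) /\
    forall e : R,
      \sum_(i < d.+1) hahn_pmul (P i) (hahn_subst (gamma ^+ i) F) e
      = @hahn_of_poly R K A e.

(* F lies in K(x) (inside the Hahn series field): F = P/Q with Q != 0 *)
Definition is_rational_hahn (R : realType) (K : fieldType) (F : R -> K) : Prop :=
  exists (P Q : {poly K}), Q != 0 /\
    forall e : R, hahn_pmul Q F e = @hahn_of_poly R K P e.

(* alpha, beta algebraically independent over Q: no nonzero bivariate
   rational polynomial p(X,Y) vanishes at (alpha, beta).
   p : {poly {poly rat}} is read with inner variable X and outer variable Y. *)
Definition alg_indep2 (R : realType) (alpha beta : R) : Prop :=
  forall p : {poly {poly rat}}, p != 0 ->
    (map_poly (map_poly (ratr : rat -> R)) p).[beta%:P].[alpha] != 0.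

From HB Require Import structures.
From mathcomp Require Import all_boot all_order all_algebra all_field.
From mathcomp Require Import reals.
From Stdlib Require Import Classical.
Set Implicit Arguments. Unset Strict Implicit. Unset Printing Implicit Defensive.
Import Order.TTheory GRing.Theory Num.Theory.
Local Open Scope ring_scope.

(* Read coefficientwise, a gamma-Mahler equation
   sum_i P_i(x) F(x^(gamma^i)) = A(x) says that every nonzero contribution
   P_i[k] F_s to the coefficient of x^(s gamma^i + k) must be cancelled by
   another one or matched by A.  Let s be the least non-integral exponent of F
   and choose the nonzero coefficient P_i[k] minimising s gamma^i + k: its
   partner yields s gamma^i = u gamma^j + c with c in Z and either u in Z, or
   u = s and j <> i.  Hence s lies in Q(alpha) and in Q(beta), which meet in Q
   by algebraic independence, and then transcendence of alpha forces s into Z.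
   So F is supported on Z.  If some P_i with i > 0 is nonzero, matching its
   leading term against a nonzero exponent z gives z alpha^i + k = w alpha^j + k',
   which the transcendence of alpha only allows for the term itself; so F is
   constant.  Otherwise the equation reads P_0 F = A. *)
Section RationalRelations.
Variable R : realType.

Definition transcendental (g : R) : Prop :=
  forall q : {poly rat}, q != 0 -> (map_poly ratr q).[g] != 0.

Definition in_Q_adjoin (g e : R) : Prop :=
  exists a b : {poly rat},
    a != 0 /\ e * (map_poly ratr a).[g] = (map_poly ratr b).[g].

Lemma alg_indep2_transcendental_l (alpha beta : R) :
  alg_indep2 alpha beta -> transcendental alpha.
Proof.
move=> indep q q0; have := indep q%:P; rewrite polyC_eq0 => /(_ q0).
by rewrite map_polyC /= hornerC.
Qed.

Lemma alg_indep2_Q_adjoin_rat (alpha beta e : R) : alg_indep2 alpha beta ->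
  in_Q_adjoin alpha e -> in_Q_adjoin beta e -> exists r : rat, e = ratr r.
Proof.
move=> indep [a [b [a0 Ea]]] [c [d [c0 Ec]]].
set p : {poly {poly rat}} := a%:P * map_poly polyC d - b%:P * map_poly polyC c.
have mapC (q : {poly rat}) :
    map_poly (map_poly (ratr : rat -> R)) (map_poly polyC q)
    = map_poly polyC (map_poly ratr q).
  by rewrite -!map_poly_comp; apply: eq_map_poly => x /=; rewrite map_polyC.
have p0 : p = 0.
  apply/eqP; apply: contraT => pn0; have := indep p pn0.
  rewrite /p rmorphB !rmorphM /= !map_polyC /= !mapC.
  rewrite !hornerE !horner_map /= !hornerE.
  by rewrite -Ea -Ec mulrCA mulrA subrr eqxx.
pose k := (size c).-1.
have ck0 : c`_k != 0 by rewrite /k -lead_coefE lead_coef_eq0.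
have bE : b = a * (d`_k / c`_k)%:P.
  have := congr1 (fun q : {poly {poly rat}} => q`_k) p0.
  rewrite /p coefB !coefCM !coef_map /= coef0 => /eqP; rewrite subr_eq0 => /eqP E.
  by rewrite polyCM mulrA E -mulrA -polyCM mulfV // mulr1.
exists (d`_k / c`_k); apply: (mulIf (alg_indep2_transcendental_l indep a0)).
by rewrite Ea bE rmorphM /= map_polyC hornerM hornerC mulrC.
Qed.

Lemma transcendental_coef_eq (g : R) (a b c e : rat) (i j : nat) :
  transcendental g -> ratr a * g ^+ i + ratr b = ratr c * g ^+ j + ratr e ->
  a + (if i == 0%N then b else 0)
    = (if i == j then c else 0) + (if i == 0%N then e else 0).
Proof.
move=> Tg E; set q := a *: 'X^i + b%:P - (c *: 'X^j + e%:P).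
have q0 : q = 0.
  apply/eqP; apply: contraT => qn0; have := Tg q qn0.
  rewrite /q rmorphB !rmorphD /= !map_polyZ !map_polyXn !map_polyC /=.
  by rewrite !hornerE E subrr eqxx.
have /eqP := congr1 (fun p : {poly rat} => p`_i) q0.
rewrite /q coef0 coefB subr_eq0 !coefD !coefZ !coefXn !coefC eqxx mulr1 => /eqP ->.
by case: (i == j); rewrite ?mulr1 ?mulr0.
Qed.

Definition shift_relation (g e : R) : Prop :=
  exists (i j : nat) (u c : R), [/\ c \is a Num.int,
    u \is a Num.int \/ (u = e /\ i != j) & e * g ^+ i = u * g ^+ j + c].

Lemma shift_relation_Q_adjoin (g e : R) : shift_relation g e -> in_Q_adjoin g e.
Proof.
move=> [i [j [u [c [/intrP [c' ->] [/intrP [u' ->] | [-> ij]] E]]]]].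
  exists 'X^i, (u'%:~R *: 'X^j + c'%:~R%:P).
  split; first exact: monic_neq0 (monicXn _ _).
  by rewrite rmorphD /= map_polyZ !map_polyXn map_polyC /= !hornerE !ratr_int.
exists ('X^i - 'X^j), c'%:~R%:P; split.
  apply/eqP => /(congr1 (fun p : {poly rat} => p`_i)).
  by rewrite coefB !coefXn eqxx (negPf ij) subr0 coef0 => /eqP; rewrite oner_eq0.
rewrite rmorphB /= !map_polyXn map_polyC /= !hornerE ratr_int.
by rewrite mulrBr E addrC addKr.
Qed.

Lemma transcendental_shift_relation_int (g : R) (r : rat) :
  transcendental g -> shift_relation g (ratr r) -> (ratr r : R) \is a Num.int.
Proof.
move=> Tg [i [j [u [c [/intrP [c' ->] [/intrP [u' ->] | [-> ij]] E]]]]].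
  have E' : ratr r * g ^+ i + ratr 0
      = ratr (u'%:~R : rat) * g ^+ j + ratr (c'%:~R : rat).
    by rewrite rmorph0 addr0 !ratr_int.
  move: (transcendental_coef_eq Tg E'); rewrite if_same addr0 => ->.
  apply/intrP; exists ((if i == j then u' else 0) + (if i == 0%N then c' else 0)).
  by rewrite -[in RHS]ratr_int intrD; case: (i == j); case: (i == 0%N).
have E' : ratr r * g ^+ i + ratr 0 = ratr r * g ^+ j + ratr (c'%:~R : rat).
  by rewrite rmorph0 addr0 ratr_int.
move: (transcendental_coef_eq Tg E'); rewrite if_same addr0 (negPf ij) add0r => ->.
apply/intrP; exists (if i == 0%N then c' else 0).
by rewrite -[in RHS]ratr_int; case: (i == 0%N).
Qed.

End RationalRelations.

Lemma hahn_const_rational (R : realType) (K : fieldType) (F : R -> K) :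
  (forall s, s != 0 -> F s = 0) -> is_rational_hahn F.
Proof.
move=> F0; exists (F 0)%:P, 1; split; first exact: oner_neq0.
move=> e; rewrite /hahn_pmul size_poly1 big_ord1 coefC /= mul1r subr0.
rewrite /hahn_of_poly size_polyC.
have [-> | en0] := eqVneq e 0.
  by case: (eqVneq (F 0) 0) => [-> | Fn0] /=; rewrite ?big_ord0 ?big_ord1 ?eqxx ?coefC.
rewrite F0 //; case: (F 0 != 0) => /=; last by rewrite big_ord0.
by rewrite big_ord1 (negPf en0).
Qed.

Section MahlerEquation.
Variables (R : realType) (K : fieldType) (g : R) (F : R -> K).
Variables (d : nat) (P : nat -> {poly K}) (A : {poly K}).
Hypothesis g_gt0 : 0 < g.
Hypothesis mahlerF : forall e,
  \sum_(i < d.+1) hahn_pmul (P i) (hahn_subst (g ^+ i) F) e = hahn_of_poly A e.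

Lemma mahler_term_partner (i0 k0 : nat) (s0 : R) :
  (i0 <= d)%N -> (P i0)`_k0 != 0 -> F s0 != 0 ->
  (exists n : nat, s0 * g ^+ i0 + k0%:R = n%:R) \/
  exists (j k : nat) (s : R), [/\ (j <= d)%N, (j, k) != (i0, k0),
    (P j)`_k != 0, F s != 0 & s * g ^+ j + k%:R = s0 * g ^+ i0 + k0%:R].
Proof.
move=> i0d Pk0 Fs0; set e0 := s0 * g ^+ i0 + k0%:R.
apply: NNPP => /not_or_and [noA noPartner].
have gX_neq0 (j : nat) : g ^+ j != 0 by rewrite expf_neq0 // gt_eqF.
have A0 : hahn_of_poly A e0 = 0.
  by rewrite /hahn_of_poly big1 // => n _; case: eqP => // En; case: noA; exists n.
have others_vanish (j : 'I_d.+1) (k : nat) : (nat_of_ord j, k) != (i0, k0) ->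
    (P j)`_k * F ((e0 - k%:R) / g ^+ j) = 0.
  move=> jk; case: (eqVneq (P j)`_k 0) => [-> | Pk]; first by rewrite mul0r.
  case: (eqVneq (F ((e0 - k%:R) / g ^+ j)) 0) => [-> | Fs]; first by rewrite mulr0.
  case: noPartner; exists j, k, ((e0 - k%:R) / g ^+ j).
  by split => //; [rewrite -ltnS | rewrite divfK ?subrK].
have k0P : (k0 < size (P i0))%N.
  by rewrite ltnNge; apply: contra Pk0 => /leq_sizeP ->.
have i0P : (i0 < d.+1)%N by [].
move: (mahlerF e0); rewrite A0 (bigD1 (Ordinal i0P)) //= big1 ?addr0; last first.
  move=> j ji0; rewrite /hahn_pmul big1 // => k _; apply: others_vanish.
  by apply: contra ji0 => /eqP [ji0 _]; apply/eqP/val_inj.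
rewrite /hahn_pmul /hahn_subst (bigD1 (Ordinal k0P)) //= big1 ?addr0.
  by rewrite /e0 addrK mulfK //; apply/eqP; rewrite mulf_neq0.
move=> k kk0; apply: (others_vanish (Ordinal i0P)).
by apply: contra kk0 => /eqP [kk0]; apply/eqP/val_inj.
Qed.

Lemma mahler_argmin_coef (f : nat -> nat -> R) :
  (exists i, (i <= d)%N /\ P i != 0) ->
  exists i0 k0, [/\ (i0 <= d)%N, (P i0)`_k0 != 0 & forall j k,
    (j <= d)%N -> (P j)`_k != 0 -> f i0 k0 <= f j k].
Proof.
move=> [i1 [i1d Pi1]].
pose B := \max_(i < d.+1) size (P i).
have szB (j : 'I_d.+1) : (size (P j) <= B)%N := leq_bigmax j.
have i1P : (i1 < d.+1)%N by [].
have k1B : ((size (P i1)).-1 < B)%N.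
  by rewrite (leq_trans _ (szB (Ordinal i1P))) // prednK // size_poly_gt0.
pose Q (p : 'I_d.+1 * 'I_B) := (P p.1)`_p.2 != 0.
have Q1 : Q (Ordinal i1P, Ordinal k1B) by rewrite /Q /= -lead_coefE lead_coef_eq0.
case: (arg_minP (fun p : 'I_d.+1 * 'I_B => f p.1 p.2) Q1) => -[i0 k0] Q0 min0.
exists i0, k0; split => //; first by rewrite -ltnS.
move=> j k jd Pjk; have jP : (j < d.+1)%N := jd.
have kB : (k < B)%N.
  rewrite (leq_trans _ (szB (Ordinal jP))) //= ltnNge.
  by apply: contra Pjk => /leq_sizeP ->.
exact: (min0 (Ordinal jP, Ordinal kB)).
Qed.

Lemma mahler_least_nonint_shift (es : R) :
  (exists i, (i <= d)%N /\ P i != 0) -> F es != 0 -> es \notin Num.int ->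
  (forall s, F s != 0 -> s \notin Num.int -> es <= s) -> shift_relation g es.
Proof.
move=> nzP Fes es_nint es_min.
have [i0 [k0 [i0d Pk0 min0]]] :=
  mahler_argmin_coef (fun i k => es * g ^+ i + k%:R) nzP.
case: (mahler_term_partner i0d Pk0 Fes) =>
  [[n En] | [j [k [s [jd jk Pjk Fs Es]]]]].
  exists i0, 0%N, 0, (n%:R - k0%:R); split; first by rewrite rpredB ?natr_int.
    by left; exact: int_num0.
  by rewrite mul0r add0r -En addrK.
have [s_int | s_nint] := boolP (s \is a Num.int).
  exists i0, j, s, (k%:R - k0%:R); split; first by rewrite rpredB ?natr_int.
    by left.
  by rewrite addrA Es addrK.
have Ej : es * g ^+ j + k%:R = es * g ^+ i0 + k0%:R.
  apply/eqP; rewrite eq_le min0 // andbT -Es lerD2r.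
  by rewrite ler_pM2r ?exprn_gt0 // es_min.
have ji0 : i0 != j.
  apply: contra jk => /eqP ji0; rewrite -ji0 in Ej *.
  by move/addrI/eqP: Ej; rewrite eqr_nat => /eqP ->.
exists i0, j, es, (k%:R - k0%:R); split; first by rewrite rpredB ?natr_int.
  by right.
by rewrite addrA Ej addrK.
Qed.

Lemma mahler_int_support_const (i : nat) : transcendental g ->
  (forall s, F s != 0 -> s \is a Num.int) -> (0 < i <= d)%N -> P i != 0 ->
  forall s, s != 0 -> F s = 0.
Proof.
move=> Tg Fint /andP [i_gt0 id] Pi s s0; apply/eqP; apply: contraT => Fs.
have /intrP [z Ez] := Fint s Fs.
have z0 : z != 0 by apply: contraNneq s0 => z0; rewrite Ez z0.
have Plead : (P i)`_(size (P i)).-1 != 0 by rewrite -lead_coefE lead_coef_eq0.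
have i_neq0 : (i == 0%N) = false by rewrite eqn0Ngt i_gt0.
set k0 := (size (P i)).-1 in Plead *.
case: (mahler_term_partner id Plead Fs) =>
  [[n En] | [j [k [s' [jd jk Pjk Fs' Es]]]]].
  have E : ratr (z%:~R : rat) * g ^+ i + ratr (k0%:R : rat)
      = ratr (0 : rat) * g ^+ 0 + ratr (n%:R : rat).
    by rewrite !ratr_int !ratr_nat rmorph0 mul0r add0r -Ez.
  move: (transcendental_coef_eq Tg E); rewrite i_neq0 !addr0 => /eqP.
  by rewrite intr_eq0 (negPf z0).
have /intrP [w Ew] := Fint s' Fs'.
have E : ratr (z%:~R : rat) * g ^+ i + ratr (k0%:R : rat)
    = ratr (w%:~R : rat) * g ^+ j + ratr (k%:R : rat).
  by rewrite !ratr_int !ratr_nat -Ez -Ew Es.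
move: (transcendental_coef_eq Tg E); rewrite i_neq0 !addr0.
case: eqVneq => [ij | _] /eqP; last by rewrite intr_eq0 (negPf z0).
rewrite eqr_int => /eqP zw; move: Es; rewrite -ij Ez Ew zw => /addrI /eqP.
by rewrite eqr_nat => /eqP kk0; move: jk; rewrite ij kk0 eqxx.
Qed.

Lemma mahler_order0_rational : (exists i, (i <= d)%N /\ P i != 0) ->
  (forall i, (0 < i <= d)%N -> P i = 0) -> is_rational_hahn F.
Proof.
move=> [i [id Pi]] P_pos0; exists A, (P 0%N); split.
  by case: i id Pi => [// | i] id Pi; rewrite P_pos0 ?eqxx in Pi.
move=> e; rewrite -mahlerF big_ord_recl /= big1 ?addr0.
  by apply: eq_bigr => k _; rewrite /hahn_subst expr0 divr1.
by move=> j _; rewrite /hahn_pmul P_pos0 ?size_poly0 ?big_ord0 // ltn_ord.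
Qed.

End MahlerEquation.

Lemma hahn_mahler2_support_int (R : realType) (K : fieldType) (alpha beta : R)
  (F : R -> K) : 0 < alpha -> 0 < beta -> alg_indep2 alpha beta ->
  is_hahn F -> is_mahler alpha F -> is_mahler beta F ->
  forall s, F s != 0 -> s \is a Num.int.
Proof.
move=> a0 b0 indep hahnF [dA [PA [AA [nzA eqA]]]] [dB [PB [AB [nzB eqB]]]] s Fs.
apply: contraT => s_nint.
have [es [[Fes es_nint] es_min]] :=
  hahnF (fun e => F e != 0 /\ e \notin Num.int) (fun _ => @proj1 _ _)
    (ex_intro _ s (conj Fs s_nint)).
have es_least t : F t != 0 -> t \notin Num.int -> es <= t.
  by move=> Ft t_nint; apply: es_min.
have relA := mahler_least_nonint_shift a0 eqA nzA Fes es_nint es_least.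
have relB := mahler_least_nonint_shift b0 eqB nzB Fes es_nint es_least.
have [r Er] := alg_indep2_Q_adjoin_rat indep
  (shift_relation_Q_adjoin relA) (shift_relation_Q_adjoin relB).
rewrite Er in relA es_nint.
have Talpha := alg_indep2_transcendental_l indep.
by rewrite (transcendental_shift_relation_int Talpha relA) in es_nint.
Qed.

Theorem mainTheorem2 (R : realType) (K : fieldExtType rat)
  (alpha beta : R) (F : R -> K) :
  0 < alpha -> 0 < beta -> alg_indep2 alpha beta ->
  is_hahn F -> is_mahler alpha F -> is_mahler beta F ->
  is_rational_hahn F.
Proof.
move=> a0 b0 indep hahnF mahA mahB.
have Fint := hahn_mahler2_support_int a0 b0 indep hahnF mahA mahB.
have [d [P [A [nzP eqA]]]] := mahA.
case: (classic (forall i, (0 < i <= d)%N -> P i = 0)) =>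
  [P_pos0 | /not_all_ex_not [i /(@imply_to_and _ (P i = 0)) [i_range /eqP Pi]]].
  exact: mahler_order0_rational eqA nzP P_pos0.
have Talpha := alg_indep2_transcendental_l indep.
apply: hahn_const_rational.
exact: (mahler_int_support_const a0 eqA Talpha Fint i_range Pi).
Qed.
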